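(* Let $f:G\to H$, $f':G'\to H'$, $\varphi:G\to G'$, $\psi:H\to H'$ and $\xi:H'\to H$ be group homomorphisms such that $f'\circ\varphi=\psi\circ f$ and $\psi\circ\xi=\mathrm{id}_{H'}$. If $\xi$ is surjective or $f'$ does not admit a global section, then $\mathrm{sec}(f)\geq \mathrm{sec}(f')$. Moreover, if $\varphi$ is an isomorphism and $\xi$ is surjective, then $\mathrm{sec}(f)=\mathrm{sec}(f')$.
   Context: For a homomorphism $f:G\to H$ and a subgroup $L\le H$, a local section of $f$ on $L$ is a homomorphism $s:L\to G$ with $f\circ s=\mathrm{incl}_L$ (the inclusion $L\hookrightarrow H$); a global section is a local section on $L=H$. The sectional number $\mathrm{sec}(f)$ is the least positive integer $m$ such that there exist proper subgroups $H_1,\ldots,H_m$ of $H$ with $H=H_1\cup\cdots\cup H_m$ and such that $f$ admits a local section on each $H_i$; $\mathrm{sec}(f)=\infty$ if no such $m$ exists. *)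

From mathcomp Require Import all_boot monoid.
From mathcomp Require Import boolp.
Set Implicit Arguments. Unset Strict Implicit. Unset Printing Implicit Defensive.
Local Open Scope group_scope.

Definition is_hom (G H : groupType) (f : G -> H) : Prop :=
  forall x y : G, f (x * y) = f x * f y.

Definition is_subgroup (H : groupType) (L : H -> Prop) : Prop :=
  [/\ L 1, (forall x y, L x -> L y -> L (x * y)) & (forall x, L x -> L x^-1)].

Definition proper_subgroup (H : groupType) (L : H -> Prop) : Prop :=
  is_subgroup L /\ exists x, ~ L x.

(* s is a local section of f on L: a homomorphism L -> G (represented by a function
   H -> G whose values outside L are irrelevant) with f (s x) = x for x in L *)
Definition local_section (G H : groupType) (f : G -> H) (L : H -> Prop) (s : H -> G) : Prop :=
  (forall x y, L x -> L y -> s (x * y) = s x * s y) /\ (forall x, L x -> f (s x) = x).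

Definition has_local_section (G H : groupType) (f : G -> H) (L : H -> Prop) : Prop :=
  exists s, local_section f L s.

Definition has_global_section (G H : groupType) (f : G -> H) : Prop :=
  has_local_section f (fun _ => True).

Definition sec_cover (G H : groupType) (f : G -> H) (m : nat) : Prop :=
  (0 < m)%N /\
  exists Hs : nat -> H -> Prop,
    (forall i, (i < m)%N -> proper_subgroup (Hs i) /\ has_local_section f (Hs i)) /\
    (forall x, exists2 i, (i < m)%N & Hs i x).

(* sectional number: Some m = least such m, None = infinity *)
Definition sec (G H : groupType) (f : G -> H) : option nat :=
  match pselect (exists m, `[< sec_cover f m >]) with
  | left ex => Some (ex_minn ex)
  | right _ => None
  end.

Definition ext_le (a b : option nat) : Prop :=
  match a, b with
  | _, None => True
  | None, Some _ => False
  | Some m, Some n => (m <= n)%N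
  end.

From mathcomp Require Import all_boot monoid.
From mathcomp Require Import boolp.
Set Implicit Arguments. Unset Strict Implicit. Unset Printing Implicit Defensive.
Local Open Scope group_scope.

(* Pulling back along the retraction [xi] turns a local section [s] of [f] on
   [L] into the local section [phi \o s \o xi] of [f'] on [xi^-1(L)], and the
   pulled-back subgroups still cover [H'].  They stay proper when [xi] is onto,
   and also when [f'] has no global section, since a local section on all of
   [H'] would be global.  Hence every sectional cover of [f] gives one of [f']
   with the same number of pieces.  When [phi] is an isomorphism and [xi] is
   onto, [xi] and [psi] are mutually inverse, so the same argument applied to
   [(phi^-1, xi, psi)] gives the reverse inequality. *)

Lemma is_hom1 (G H : groupType) (f : G -> H) : is_hom f -> f 1 = 1.
Proof. by move=> hf; apply: (@mulIg _ (f 1)); rewrite -hf !mul1g. Qed.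

Lemma is_homV (G H : groupType) (f : G -> H) : is_hom f -> forall x, f x^-1 = (f x)^-1.
Proof. by move=> hf x; apply: (@mulIg _ (f x)); rewrite -hf !mulVg is_hom1. Qed.

Lemma is_hom_inv (G G' : groupType) (phi : G -> G') (phi_inv : G' -> G) :
  is_hom phi -> cancel phi phi_inv -> cancel phi_inv phi -> is_hom phi_inv.
Proof. by move=> hphi pK pK' a b; rewrite -{1}(pK' a) -{1}(pK' b) -hphi pK. Qed.

Section Preimage.

Variables (H' H : groupType) (k : H' -> H).
Hypothesis hk : is_hom k.

Lemma is_subgroup_preim (L : H -> Prop) : is_subgroup L -> is_subgroup (fun x => L (k x)).
Proof.
case=> L1 LM LV; split=> [|a b ha hb|a ha]; first by rewrite is_hom1.
  by rewrite hk; apply: LM.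
by rewrite is_homV //; apply: LV.
Qed.

Lemma proper_subgroup_preim (L : H -> Prop) :
  (forall h, exists h', k h' = h) -> proper_subgroup L -> proper_subgroup (fun x => L (k x)).
Proof.
move=> k_onto [subL [x Lx]]; split; first exact: is_subgroup_preim.
by have [x' kx'] := k_onto x; exists x'; rewrite kx'.
Qed.

End Preimage.

Lemma has_local_section_preim (G H G' H' : groupType)
    (f : G -> H) (f' : G' -> H') (phi : G -> G') (psi : H -> H') (xi : H' -> H)
    (L : H -> Prop) :
  is_hom phi -> is_hom xi ->
  (forall g, f' (phi g) = psi (f g)) -> (forall h', psi (xi h') = h') ->
  has_local_section f L -> has_local_section f' (fun x => L (xi x)).
Proof.
move=> hphi hxi hcomm hret [s [sM sK]]; exists (fun x => phi (s (xi x))); split.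
  by move=> a b ha hb; rewrite hxi sM // hphi.
by move=> a ha; rewrite hcomm sK.
Qed.

Lemma local_section_domain_proper (G H : groupType) (f : G -> H) (L : H -> Prop) :
  ~ has_global_section f -> has_local_section f L -> exists x, ~ L x.
Proof.
move=> nglob [s [sM sK]]; apply: contrapT => Ltotal; apply: nglob.
have Lx x : L x by apply: contrapT => nLx; apply: Ltotal; exists x.
by exists s; split=> [a b _ _|a _]; [apply: sM | apply: sK].
Qed.

Lemma sec_cover_preim (G H G' H' : groupType) (f : G -> H) (f' : G' -> H')
    (k : H' -> H) (m : nat) :
  (forall L, proper_subgroup L -> has_local_section f L ->
     proper_subgroup (fun x => L (k x)) /\ has_local_section f' (fun x => L (k x))) ->
  sec_cover f m -> sec_cover f' m.
Proof.
move=> pullback [m_gt0 [Hs [HsP Hscov]]]; split=> //.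
exists (fun i x => Hs i (k x)); split.
  by move=> i im; have [] := HsP i im; apply: pullback.
by move=> x; have [i im Hi] := Hscov (k x); exists i.
Qed.

Lemma secP (G H : groupType) (f : G -> H) :
  match sec f with
  | Some m => sec_cover f m /\ forall k, sec_cover f k -> (m <= k)%N
  | None => forall m, ~ sec_cover f m
  end.
Proof.
rewrite /sec; case: pselect => [ex|nex].
  case: ex_minnP => m /asboolP Hm Hmin; split=> // k Hk; apply: Hmin; exact/asboolP.
by move=> m Hm; apply: nex; exists m; apply/asboolP.
Qed.

Lemma ext_le_sec (G H G' H' : groupType) (f : G -> H) (f' : G' -> H') :
  (forall m, sec_cover f m -> sec_cover f' m) -> ext_le (sec f') (sec f).
Proof.
move=> cov; have := secP f; have := secP f'.
case: (sec f) => [m|]; case: (sec f') => [n|] //=.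
- by move=> [_ n_min] [m_cov _]; apply/n_min/cov.
- by move=> n_none [m_cov _]; apply/(n_none m)/cov.
Qed.

Lemma ext_le_anti (a b : option nat) : ext_le a b -> ext_le b a -> a = b.
Proof. by case: a => [m|]; case: b => [n|] //= mn nm; congr Some; apply/eqP; rewrite eqn_leq mn. Qed.

Theorem proposition2p9 (G H G' H' : groupType)
  (f : G -> H) (f' : G' -> H') (phi : G -> G') (psi : H -> H') (xi : H' -> H)
  (hf : is_hom f) (hf' : is_hom f') (hphi : is_hom phi) (hpsi : is_hom psi) (hxi : is_hom xi)
  (hcomm : forall g, f' (phi g) = psi (f g))
  (hret : forall h', psi (xi h') = h') :
  ((forall h, exists h', xi h' = h) \/ ~ has_global_section f' -> ext_le (sec f') (sec f)) /\
  ((exists phi_inv : G' -> G, (forall g, phi_inv (phi g) = g) /\ (forall g', phi (phi_inv g') = g')) ->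
   (forall h, exists h', xi h' = h) -> sec f = sec f').
Proof.
have sec_f'_le : (forall h, exists h', xi h' = h) \/ ~ has_global_section f' ->
    ext_le (sec f') (sec f).
  move=> hyp; apply: ext_le_sec => m; apply: sec_cover_preim => L Lproper Lsec.
  have L'sec := has_local_section_preim hphi hxi hcomm hret Lsec.
  split; last exact: L'sec.
  case: hyp => [xi_onto|nglob]; first exact: proper_subgroup_preim.
  split; first exact: is_subgroup_preim Lproper.1.
  exact: local_section_domain_proper nglob L'sec.
split; first exact: sec_f'_le.
move=> [phi_inv [pK pK']] xi_onto; apply: ext_le_anti; last by apply: sec_f'_le; left.
have xiK h : xi (psi h) = h by have [h' <-] := xi_onto h; rewrite hret.
have hcomm_inv g' : f (phi_inv g') = xi (f' g') by rewrite -{2}(pK' g') hcomm xiK.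
have psi_onto h' : exists h, psi h = h' by exists (xi h').
apply: ext_le_sec => m; apply: sec_cover_preim => L Lproper Lsec; split.
  exact: proper_subgroup_preim.
exact: has_local_section_preim (is_hom_inv hphi pK pK') hpsi hcomm_inv xiK Lsec.
Qed.
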